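(* Let $m\geq 1$, $n\geq 3$, and let $k,r\in\{1,\ldots,m\}$ with $k\neq r$. There exists a walk of length $n-1$ in $D^m_n$ from a vertex $i\in V^k\setminus\{1\}$ to a vertex $j\in V^r\setminus\{1\}$ if and only if there exists $\ell\in\{3,\ldots,n\}$ such that $i=(k-1)(n-1)+\ell$ and $j=(r-1)(n-1)+(\ell-1)$. Moreover, in such cases this walk is unique.
   Context: For integers $m\geq 1$, $n\geq 3$, the oriented Dutch windmill graph $D^m_n$ is the directed graph with vertex set $V=\{1,2,\ldots,m(n-1)+1\}$ whose directed edges $(a,b)$ are exactly: $(1,(k-1)(n-1)+2)$ for $k\in\{1,\ldots,m\}$; $((k-1)(n-1)+i,(k-1)(n-1)+i+1)$ for $k\in\{1,\ldots,m\}$ and $i\in\{2,\ldots,n-1\}$; and $((k-1)(n-1)+n,1)$ for $k\in\{1,\ldots,m\}$. For $k\in\{1,\ldots,m\}$, $V^k=\{1\}\cup\{(k-1)(n-1)+\ell:\ \ell=2,\ldots,n\}$. A walk is a sequence of vertices $\langle v_1,\ldots,v_r\rangle$ in which each $(v_t,v_{t+1})$ is an edge; its length is $r-1$. *)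

From mathcomp Require Import all_boot.
Set Implicit Arguments. Unset Strict Implicit. Unset Printing Implicit Defensive.

Definition dw_edge (m n : nat) (a b : nat) : bool :=
  has (fun k =>
         [|| (a == 1) && (b == (k - 1) * (n - 1) + 2),
             has (fun i => (a == (k - 1) * (n - 1) + i) && (b == (k - 1) * (n - 1) + i + 1))
                 (iota 2 (n - 2))
           | (a == (k - 1) * (n - 1) + n) && (b == 1)])
      (iota 1 m).

Definition dw_vertex (m n x : nat) : bool := (1 <= x) && (x <= m * (n - 1) + 1).

Definition dw_Vk (n k x : nat) : bool :=
  (x == 1) || ((k - 1) * (n - 1) + 2 <= x <= (k - 1) * (n - 1) + n).

Definition dw_walk (m n : nat) (w : seq nat) (i j len : nat) : Prop :=
  [/\ size w = len.+1, head 0 w = i, last 0 w = j,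
      all (dw_vertex m n) w & path (dw_edge m n) (head 0 w) (behead w)].

From mathcomp Require Import all_boot.
From mathcomp Require Import zify.

Set Implicit Arguments.
Unset Strict Implicit.
Unset Printing Implicit Defensive.

(* Every vertex other than the hub 1 has a single out-neighbour, so a walk
   from a non-hub vertex is forced until it reaches the hub, where it chooses
   the blade to enter.  From the l-th vertex of blade k, a walk of length n-1
   reaches the tip of blade k after n-l steps and the hub one step later; its
   remaining l-2 steps run through some blade r, ending at the (l-1)-th vertex
   of r (and l >= 3, as the walk must not end at the hub).  The endpoint thus
   determines r, l and the whole walk. *)

Lemma eq_mulnD_bounded N a b x y : 0 < x <= N -> 0 < y <= N ->
  a * N + x = b * N + y -> a = b /\ x = y.
Proof.
move=> hx hy; case: (ltngtP a b) => [ab|ba|->] E; last by split => //; lia.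
- have : a.+1 * N <= b * N by rewrite leq_mul2r ab orbT.
  rewrite mulSn; lia.
- have : b.+1 * N <= a * N by rewrite leq_mul2r ba orbT.
  rewrite mulSn; lia.
Qed.

(* Vertex l (2 <= l <= n) of blade k; as [k - 1] is truncated, blade 0 and
   blade 1 coincide, hence the conclusion of [blade_inj]. *)
Definition blade (n k l : nat) : nat := (k - 1) * (n - 1) + l.

Lemma blade_inj n k k' l l' : 2 <= l <= n -> 2 <= l' <= n ->
  blade n k l = blade n k' l' -> k - 1 = k' - 1 /\ l = l'.
Proof.
rewrite /blade => hl hl' E.
have [] := @eq_mulnD_bounded (n - 1) (k - 1) (k' - 1) (l - 1) (l' - 1); lia.
Qed.

Lemma dw_Vk_blade n k x : dw_Vk n k x -> x != 1 -> exists2 l, 2 <= l <= n & x = blade n k l.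
Proof.
rewrite /dw_Vk /blade => /orP[/eqP-> //| hx] _.
exists (x - (k - 1) * (n - 1)); lia.
Qed.

Section Windmill.
Variables m n : nat.
Hypothesis n_ge3 : 3 <= n.

Lemma dw_vertex_blade k l : 1 <= k <= m -> 1 <= l <= n -> dw_vertex m n (blade n k l).
Proof.
move=> hk hl; rewrite /dw_vertex /blade.
have : (k - 1).+1 * (n - 1) <= m * (n - 1) by rewrite leq_mul2r; apply/orP; right; lia.
rewrite mulSn; nia.
Qed.

Lemma dw_vertex_hub : dw_vertex m n 1.
Proof. by rewrite /dw_vertex leq_addl. Qed.

Lemma dw_edge_inner k l c : 1 <= k <= m -> 2 <= l < n ->
  dw_edge m n (blade n k l) c = (c == blade n k l.+1).
Proof.
move=> hk hl; apply/idP/eqP.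
- case/hasP=> k' _ /or3P[/andP[/eqP e _] | /hasP[i hi /andP[/eqP e /eqP->]] | /andP[/eqP e _]].
  + move: e; rewrite /blade; nia.
  + rewrite mem_iota in hi.
    have [<- <-] := @blade_inj n k k' l i ltac:(lia) ltac:(lia) e.
    by rewrite /blade addn1 addnS.
  + have [] := @blade_inj n k k' l n ltac:(lia) ltac:(lia) e; lia.
- move=> ->; apply/hasP; exists k; first by rewrite mem_iota; lia.
  apply/or3P/Or32/hasP; exists l; first by rewrite mem_iota; lia.
  by rewrite /blade addn1 addnS !eqxx.
Qed.

Lemma dw_edge_tip k c : 1 <= k <= m -> dw_edge m n (blade n k n) c = (c == 1).
Proof.
move=> hk; apply/idP/eqP.
- case/hasP=> k' _ /or3P[/andP[/eqP e _] | /hasP[i hi /andP[/eqP e _]] | /andP[_ /eqP //]].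
  + move: e; rewrite /blade; nia.
  + rewrite mem_iota in hi.
    have [] := @blade_inj n k k' n i ltac:(lia) ltac:(lia) e; lia.
- move=> ->; apply/hasP; exists k; first by rewrite mem_iota; lia.
  by apply/or3P/Or33; rewrite !eqxx.
Qed.

Lemma dw_edge_hub c : dw_edge m n 1 c = has (fun r => c == blade n r 2) (iota 1 m).
Proof.
apply/hasP/hasP => -[r hr].
- case/or3P=> [/andP[_ hc] | /hasP[i hi /andP[/eqP e _]] | /andP[/eqP e _]].
  + by exists r.
  + rewrite mem_iota in hi; nia.
  + nia.
- by move=> hc; exists r => //; apply/or3P/Or31; rewrite eqxx.
Qed.

Definition blade_run k l t : seq nat := [seq blade n k x | x <- iota l t].

Lemma size_blade_run k l t : size (blade_run k l t) = t.
Proof. by rewrite size_map size_iota. Qed.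

Lemma blade_run_cons k l t : blade_run k l t.+1 = blade n k l :: blade_run k l.+1 t.
Proof. by []. Qed.

Lemma last_blade_run k l t x : last x (blade_run k l t.+1) = blade n k (l + t).
Proof.
elim: t l x => [|t IHt] l x; first by rewrite addn0.
by rewrite blade_run_cons last_cons IHt addSnnS.
Qed.

Lemma last_blade_run_from k l t : last (blade n k l) (blade_run k l.+1 t) = blade n k (l + t).
Proof. exact: (last_blade_run k l t 0). Qed.

Lemma all_dw_vertex_blade_run k l t : 1 <= k <= m -> 1 <= l -> l + t <= n.+1 ->
  all (dw_vertex m n) (blade_run k l t).
Proof.
move=> hk hl hlt; apply/allP => y /mapP[x]; rewrite mem_iota => hx ->.
apply: dw_vertex_blade => //; lia.
Qed.

Lemma path_blade_runE k l t p : 1 <= k <= m -> 2 <= l -> l + t <= n -> size p = t ->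
  path (dw_edge m n) (blade n k l) p = (p == blade_run k l.+1 t).
Proof.
move=> hk; elim: t l p => [|t IHt] l [|c p] //= hl hlt [size_p].
rewrite dw_edge_inner ?eqseq_cons; try lia.
by case: eqP => [->|//]; rewrite IHt //; lia.
Qed.

Lemma path_hubE t q : t.+2 <= n -> size q = t.+1 ->
  path (dw_edge m n) 1 q <-> exists2 r, 1 <= r <= m & q = blade_run r 2 t.+1.
Proof.
case: q => [|c q] // htn [size_q]; split => /=.
- case/andP; rewrite dw_edge_hub => /hasP[r]; rewrite mem_iota => hr /eqP ->.
  have {}hr : 1 <= r <= m by lia.
  by rewrite (@path_blade_runE r 2 t q) ?add2n // => /eqP->; exists r.
- case=> r hr [-> ->]; apply/andP; split.
  + by rewrite dw_edge_hub; apply/hasP; exists r; rewrite ?mem_iota; lia.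
  + by rewrite (@path_blade_runE r 2 t) ?size_blade_run ?add2n //.
Qed.

Definition windmill_walk k r l : seq nat :=
  blade_run k l (n - l).+1 ++ 1 :: blade_run r 2 (l - 2).

Lemma windmill_walk_dw_walk k r l : 1 <= k <= m -> 1 <= r <= m -> 3 <= l <= n ->
  dw_walk m n (windmill_walk k r l) (blade n k l) (blade n r (l - 1)) (n - 1).
Proof.
move=> hk hr hl; have run_r : l - 2 = (l - 3).+1 by lia.
have [l_gt1 l_le_n] : 1 < l /\ l <= n by lia.
split.
- by rewrite size_cat /= !size_blade_run; lia.
- by [].
- by rewrite last_cat /= run_r last_blade_run; congr blade; lia.
- by rewrite all_cat [all _ (1 :: _)]/= dw_vertex_hub !all_dw_vertex_blade_run //; lia.
- rewrite /windmill_walk blade_run_cons /= cat_path last_blade_run_from subnKC //.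
  rewrite (@path_blade_runE k l (n - l)) ?size_blade_run ?subnKC //= eqxx.
  rewrite dw_edge_tip //= run_r (@path_hubE (l - 3)) ?size_blade_run //; last lia.
  by exists r.
Qed.

Lemma dw_walk_blade_inv k r l l' w : 1 <= k <= m -> 1 <= r -> 2 <= l <= n -> 2 <= l' <= n ->
  dw_walk m n w (blade n k l) (blade n r l') (n - 1) ->
  [/\ 3 <= l, l' = l - 1 & w = windmill_walk k r l].
Proof.
move=> hk hr hl hl'; have [l_gt1 l_le_n] : 1 < l /\ l <= n by lia.
case; case: w => [|x p] //= [size_p] -> last_p _ path_p.
have [p1 [q [def_p size_p1]]] : exists p1 q, p = p1 ++ q /\ size p1 = n - l.
  by exists (take (n - l) p), (drop (n - l) p); rewrite cat_take_drop size_takel // size_p; lia.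
subst p; rewrite size_cat size_p1 in size_p.
move: path_p; rewrite cat_path (@path_blade_runE k l (n - l)) ?subnKC // => /andP[/eqP def_p1].
subst p1; move: last_p; rewrite last_cat last_blade_run_from subnKC //.
case: q size_p => [|c q] /= size_q; first lia.
rewrite dw_edge_tip // => last_q /andP[/eqP def_c path_q]; subst c.
have l_gt2 : 2 < l.
  rewrite ltnNge; apply/negP => l_le2; have q0 : q = [::] by apply: size0nil; lia.
  by move: last_q; rewrite q0 /blade /=; nia.
move: path_q; rewrite (@path_hubE (l - 3)) => [[r' hr' def_q]||]; try lia.
move: last_q; rewrite def_q last_blade_run => /blade_inj[]; try lia.
move=> er el; have {er} <- : r' = r by lia.
split; [by [] | lia |].
by rewrite /windmill_walk (_ : l - 2 = (l - 3).+1) ?def_q //; lia.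
Qed.

End Windmill.

Theorem lemma2p2 (m n k r i j : nat) :
  1 <= m -> 3 <= n -> 1 <= k <= m -> 1 <= r <= m -> k != r ->
  dw_Vk n k i -> i != 1 -> dw_Vk n r j -> j != 1 ->
  ((exists w, dw_walk m n w i j (n - 1)) <->
   (exists l, [/\ 3 <= l <= n, i = (k - 1) * (n - 1) + l & j = (r - 1) * (n - 1) + (l - 1)]))
  /\ (forall w1 w2, dw_walk m n w1 i j (n - 1) -> dw_walk m n w2 i j (n - 1) -> w1 = w2).
Proof.
move=> _ n_ge3 hk hr _ Vi i1 Vj j1.
have [l hl ->] := dw_Vk_blade Vi i1.
have [l' hl' ->] := dw_Vk_blade Vj j1.
have r_gt0 : 1 <= r by case/andP: hr.
have walk_inv w := @dw_walk_blade_inv m n n_ge3 k r l l' w hk r_gt0 hl hl'.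
split; first split.
- by case=> w /walk_inv[l_ge3 -> _]; exists l; split => //; lia.
- case=> l0 [hl0 -> ->]; exists (windmill_walk n k r l0).
  exact: windmill_walk_dw_walk.
- by move=> w1 w2 /walk_inv[_ _ ->] /walk_inv[_ _ ->].
Qed.
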